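(* Let $A\subset\mathbb{R}$ be a Lebesgue measurable set and $a\in\mathbb{R}$. Then the following are equivalent: (i) every function $f:A\to\mathbb{R}$ which has a $T_6$ limit at $a$ has exactly one $T_6$ limit at $a$ (i.e. if $T_6\lim_{x\to a}f(x)=L_1$ and $T_6\lim_{x\to a}f(x)=L_2$ then $L_1=L_2$); (ii) $\left|\left((a-\delta,a+\delta)\setminus\{a\}\right)\cap A\right|>0$ for every real $\delta>0$.
   Context: $|K|$ denotes the Lebesgue measure of $K\subset\mathbb{R}$ (a set of measure zero means a Lebesgue null set, i.e. Lebesgue outer measure zero). For $A\subset\mathbb{R}$, $f:A\to\mathbb{R}$ and $a,L\in\mathbb{R}$, one writes $T_6\lim_{x\to a}f(x)=L$ if for every real $\varepsilon>0$ there exists a real $\delta_\varepsilon>0$ such that $\left|\left\{x\in\left((a-\delta_{\varepsilon},a+\delta_{\varepsilon})\setminus\{a\}\right)\cap A:\ |f(x)-L|\geq\varepsilon\right\}\right|=0$. *)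

From mathcomp Require Import all_boot all_order all_algebra.
From mathcomp Require Import all_classical all_reals all_analysis.
Set Implicit Arguments. Unset Strict Implicit. Unset Printing Implicit Defensive.
Import Order.TTheory GRing.Theory Num.Theory.
Local Open Scope classical_set_scope.
Local Open Scope ring_scope.

(* The real line equipped with the Lebesgue (= Caratheodory / completed)
   sigma-algebra; this is the domain of the library's
   [completed_lebesgue_measure] (which is the Lebesgue outer measure). *)
Definition LebR (R : realType) := caratheodory_type ((@wlength R idfun)^*)%mu.

Definition lebesgue_measurable {R : realType} (A : set R) : Prop :=
  @measurable _ (LebR R) A.

Definition leb_measure {R : realType} (K : set R) : \bar R :=
  (@completed_lebesgue_measure R : set (LebR R) -> \bar R) K.

Definition leb_null {R : realType} (K : set R) : Prop :=
  (@completed_lebesgue_measure R).-negligible (K : set (LebR R)).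

Definition punct_nbhs {R : realType} (A : set R) (a d : R) : set R :=
  ((`]a - d, a + d[%classic `\ a) `&` A).

(* T6 lim_{x -> a} f(x) = L, for f : A -> R represented as f : R -> R whose
   values outside A are irrelevant. *)
Definition T6_lim {R : realType} (A : set R) (f : R -> R) (a L : R) : Prop :=
  forall eps : R, 0 < eps -> exists2 d : R, 0 < d &
    leb_null [set x | punct_nbhs A a d x /\ eps <= `|f x - L|].

From mathcomp Require Import all_boot all_order all_algebra.
From mathcomp Require Import all_classical all_reals all_analysis.
Import Order.TTheory GRing.Theory Num.Theory.
Local Open Scope classical_set_scope.
Local Open Scope ring_scope.

(* If some punctured neighbourhood of a meets A in a null set, every real is a
   T6 limit at a of every function, so limits are not unique.  Conversely, if
   L1 <> L2 were both T6 limits of f, then with eps = |L1 - L2| / 2 every x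
   has |f x - L1| >= eps or |f x - L2| >= eps, so the punctured neighbourhood
   of radius min(d1, d2) is covered by the two null exceptional sets. *)

Lemma outer_measure_sub0 {R : realType} (T : Type)
    (mu : {outer_measure set T -> \bar R}) (A B : set T) :
  A `<=` B -> mu B = 0%E -> mu A = 0%E.
Proof.
move=> AB muB0; apply/eqP.
by rewrite eq_le outer_measure_ge0 andbT -muB0 le_outer_measure.
Qed.

Lemma caratheodory_negligibleE {R : realType} (T : pointedType)
    (mu : {outer_measure set T -> \bar R}) (K : set T) :
  (mu : set (caratheodory_type mu) -> \bar R).-negligible K <-> mu K = 0%E.
Proof.
split=> [[B [_ muB0 KB]]|muK0]; first exact: outer_measure_sub0 KB muB0.
exists K; split=> //; apply: le_caratheodory_measurable => X.
rewrite (@outer_measure_sub0 _ _ _ (X `&` K) K)//.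
by rewrite add0e le_outer_measure//; exact: subIsetl.
Qed.

Lemma leb_nullE {R : realType} (K : set R) : leb_null K <-> leb_measure K = 0%E.
Proof. exact: caratheodory_negligibleE. Qed.

Lemma leb_measure_ge0 {R : realType} (K : set R) : (0 <= leb_measure K)%E.
Proof. exact: measure_ge0. Qed.

Lemma half_dist_le_max {R : realFieldType} (y z1 z2 : R) :
  `|z1 - z2| / 2 <= Num.max `|y - z1| `|y - z2|.
Proof.
rewrite ler_pdivrMr// mulr_natr mulr2n (le_trans (ler_distD y _ _))//.
by rewrite distrC lerD// ?le_max ?lexx ?orbT.
Qed.

Lemma punct_nbhsS {R : realType} {A : set R} {a d d' : R} :
  d <= d' -> punct_nbhs A a d `<=` punct_nbhs A a d'.
Proof.
move=> dd' x [[+ xa] Ax]; rewrite /= !in_itv/= => /andP[lx xr].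
split=> //; split=> //=; rewrite in_itv/=.
by rewrite (le_lt_trans _ lx) ?(lt_le_trans xr) ?lerD2l ?lerN2.
Qed.

Lemma T6_lim_punct_nbhs_null {R : realType} {A : set R} {f : R -> R} {a d L : R} :
  0 < d -> leb_null (punct_nbhs A a d) -> T6_lim A f a L.
Proof.
move=> d0 null eps _; exists d => //.
by apply: negligibleS null => x [].
Qed.

Lemma T6_lim_neq_punct_nbhs_null {R : realType} {A : set R} {f : R -> R}
    {a L1 L2 : R} :
  T6_lim A f a L1 -> T6_lim A f a L2 -> L1 != L2 ->
  exists2 d, 0 < d & leb_null (punct_nbhs A a d).
Proof.
move=> lim1 lim2 L12.
have eps0 : 0 < `|L1 - L2| / 2 by rewrite divr_gt0// normr_gt0 subr_eq0.
have [d1 d10 null1] := lim1 _ eps0.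
have [d2 d20 null2] := lim2 _ eps0.
exists (Num.min d1 d2); first by rewrite lt_min d10 d20.
apply: negligibleS (negligibleU null1 null2) => x Ax.
have := half_dist_le_max (f x) L1 L2; rewrite le_max => /orP[far1|far2].
- by left; split=> //; apply: punct_nbhsS Ax; rewrite ge_min lexx.
- by right; split=> //; apply: punct_nbhsS Ax; rewrite ge_min lexx orbT.
Qed.

Theorem theorem5 (R : realType) (A : set R) (a : R) :
  lebesgue_measurable A ->
  ((forall (f : R -> R) (L1 L2 : R), T6_lim A f a L1 -> T6_lim A f a L2 -> L1 = L2)
   <-> (forall d : R, 0 < d -> (0 < leb_measure (punct_nbhs A a d))%E)).
Proof.
move=> _; split=> [uniq d d0|pos f L1 L2 lim1 lim2].
- rewrite lt0e leb_measure_ge0 andbT; apply/negP => /eqP/leb_nullE null.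
  have lim L : T6_lim A (fun=> 0) a L := T6_lim_punct_nbhs_null d0 null.
  by have /eqP := uniq _ _ _ (lim 0) (lim 1); rewrite eq_sym oner_eq0.
- apply/eqP/contraT => /(T6_lim_neq_punct_nbhs_null lim1 lim2)[d d0 /leb_nullE].
  by have := pos d d0; rewrite lt0e => /andP[/eqP].
Qed.
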